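(* Let $U$ be the distribution function of a sub-probability measure on $(0,\infty)$, set $\hat U(\lambda)=\int_0^\infty e^{-\lambda x}\,dU(x)$, and let $p>0$. (a) If for some $C_2>0$, $\hat U(\lambda)\le C_2\lambda^{-p}$ for all $\lambda>0$, then $U(a)\le eC_2a^p$ for all $a>0$. (b) Assume $\hat U(\lambda)\le C_2\lambda^{-p}$ for all $\lambda>0$ and, for some $C_1>0$ and $\underline\lambda\ge0$, $\hat U(\lambda)\ge C_1\lambda^{-p}$ for all $\lambda>\underline\lambda$. If \[d_1=\frac{C_1}2\Bigl(2\log\Bigl(\Bigl(\frac{2p}e\Bigr)^p\frac{4eC_2}{C_1}\Bigr)\vee2p\vee\underline\lambda\Bigr)^{-p},\] then $U(a)\ge d_1a^p$ for all $a\in[0,1]$. In particular, if $p\le1$ and $\underline\lambda\le4$, then \[U(a)\ge\frac{C_1}4\Bigl(\log\Bigl(\frac{4eC_2}{C_1}\Bigr)\Bigr)^{-1}a^p\quad\text{for all }a\in[0,1].\] *)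

From HB Require Import structures.
From mathcomp Require Import all_boot all_order all_algebra.
From mathcomp Require Import all_classical all_reals all_analysis.
Set Implicit Arguments. Unset Strict Implicit. Unset Printing Implicit Defensive.
Import Order.TTheory GRing.Theory Num.Theory.
Local Open Scope classical_set_scope.
Local Open Scope ring_scope.

Definition subprob_on_pos (R : realType) (mu : {measure set R -> \bar R}) : Prop :=
  (mu setT <= 1)%E /\ mu (~` `]0%R, +oo[%classic) = 0%E.

Definition distU (R : realType) (mu : {measure set R -> \bar R}) (a : R) : \bar R :=
  mu `]-oo, a]%classic.

Definition laplaceU (R : realType) (mu : {measure set R -> \bar R}) (l : R) : \bar R :=
  (\int[mu]_(x in `]0%R, +oo[%classic) (expR (- (l * x)))%:E)%E.

From HB Require Import structures.
From mathcomp Require Import all_boot all_order all_algebra.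
From mathcomp Require Import all_classical all_reals all_analysis.
From mathcomp Require Import measurable_realfun ring lra.
Set Implicit Arguments. Unset Strict Implicit. Unset Printing Implicit Defensive.
Import Order.TTheory GRing.Theory Num.Theory.
Local Open Scope classical_set_scope.
Local Open Scope ring_scope.

(* Two pointwise bounds on e^{-lx} drive the argument.  Since e^{-lx} >= e^{-la}
   on ]0,a], we get e^{-la} U(a) <= Uhat(l), and l = 1/a gives (a).  Since
   e^{-lx} <= e^{-la/2} e^{-lx/2} for x > a, we get Uhat(l) <= U(a) + e^{-la/2} Uhat(l/2);
   at l = s/a the two-sided bound on Uhat turns this into
     C1 s^-p a^p <= U(a) + 2^p C2 e^{-s/2} s^-p a^p,
   so U(a) >= (C1/2) s^-p a^p as soon as 2^(p+1) C2 e^{-s/2} <= C1 and s/a > lam0.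
   The scale s in d1 is chosen so that both conditions hold for a <= 1. *)

Section RealInequalities.
Variable R : realType.
Implicit Types p x y : R.

Lemma powRVN x p : 0 <= x -> x^-1 `^ (- p) = x `^ p.
Proof. by move=> x0; rewrite -powR_inv1 // -powRrM mulN1r opprK. Qed.

Lemma powR_divN x y p : 0 <= x -> 0 <= y -> (x / y) `^ (- p) = x `^ (- p) * y `^ p.
Proof. by move=> x0 y0; rewrite powRM ?invr_ge0 // powRVN. Qed.

Lemma le_of_forall_mul_powR_le x y p : 0 < p -> 0 <= x ->
  (forall t, 0 < t < 1 -> y * t `^ p <= x) -> y <= x.
Proof.
move=> p0 x0 yx; rewrite leNgt; apply/negP => xy.
set z := (x + y) / 2.
have z0 : 0 < z by rewrite /z; lra.
have zy : z < y by rewrite /z; lra.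
have y0 : 0 < y by apply: lt_trans zy.
set t := (z / y) `^ p^-1.
have tp : t `^ p = z / y.
  by rewrite -powRrM mulVf ?gt_eqF // powRr1 // divr_ge0 // ltW.
have t0 : 0 < t by rewrite powR_gt0 // divr_gt0.
have t1 : t < 1.
  have zy1 : z / y < 1 by rewrite ltr_pdivrMr // mul1r.
  have pV0 : 0 < p^-1 by rewrite invr_gt0.
  have := gt0_ltr_powR pV0 _ _ zy1; rewrite powR1.
  by apply; rewrite nnegrE ?ler01 // divr_ge0 // ltW.
have := yx t; rewrite t0 t1 tp mulrC divfK ?gt_eqF // => /(_ isT).
by rewrite /z; lra.
Qed.

Lemma expR1_le4 : expR 1 <= 4 :> R.
Proof.
have h : 1 / 2 <= expR (- (1 / 2)) :> R by have := expR_ge1Dx (- (1 / 2) : R); lra.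
have h2 : expR (1 / 2) * expR (- (1 / 2)) = 1 :> R by rewrite -expRD subrr expR0.
have -> : expR 1 = expR (1 / 2) * expR (1 / 2) :> R by rewrite -expRD -splitr.
have : 0 < expR (1 / 2) :> R := expR_gt0 _.
nra.
Qed.

Lemma expR_subr1_le_powR p : 0 < p -> expR (p - 1) <= p `^ p.
Proof.
move=> p0; rewrite /powR gt_eqF // ler_expR.
have pV0 : 0 < p^-1 by rewrite invr_gt0.
have : -1 < p^-1 - 1 by lra.
move=> /le_ln1Dx; rewrite addrC subrK lnV ?posrE // => /(ler_wpM2l (ltW p0)).
rewrite mulrBr mulfV ?gt_eqF // mulr1 mulrN.
lra.
Qed.

Lemma powR2_le_expR1_powR p : 0 < p -> 2 `^ p <= (2 * p / expR 1) `^ p * expR 1.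
Proof.
move=> p0; have e0 : 0 <= (expR 1)^-1 :> R by rewrite invr_ge0 expR_ge0.
rewrite -mulrA powRM ?mulr_ge0 // ?(ltW p0) // powRM ?(ltW p0) //.
rewrite -expRN -expRM mulN1r.
have one_le : 1 <= p `^ p * expR (- p) * expR 1.
  have FCE : expR (p - 1) * expR (- p) * expR 1 = 1 :> R.
    by rewrite -!expRD (_ : p - 1 + - p + 1 = 0) ?expR0 //; lra.
  rewrite -[leLHS]FCE.
  apply: ler_wpM2r; first exact: expR_ge0.
  by apply: ler_wpM2r; [exact: expR_ge0 | exact: expR_subr1_le_powR].
by rewrite -mulrA -[leLHS]mulr1; apply: ler_wpM2l; rewrite ?powR_ge0.
Qed.

End RealInequalities.

(* The base of the power in the paper's d1: d1 = C1/2 * lower_scale^(-p). *)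
Definition lower_scale {R : realType} (p C1 C2 lam0 : R) : R :=
  Num.max (Num.max (2 * ln ((2 * p / expR 1) `^ p * (4 * expR 1 * C2 / C1))) (2 * p))
    lam0.

Section LowerScale.
Variables (R : realType) (p C1 C2 lam0 : R).
Hypotheses (p_gt0 : 0 < p) (C1_gt0 : 0 < C1) (C2_gt0 : 0 < C2).

Lemma le_lower_scale : lam0 <= lower_scale p C1 C2 lam0.
Proof. by rewrite /lower_scale le_max lexx orbT. Qed.

Lemma lower_scale_gt0 : 0 < lower_scale p C1 C2 lam0.
Proof.
by apply: (lt_le_trans (y := 2 * p)); rewrite ?mulr_gt0 // /lower_scale !le_max lexx orbT.
Qed.

Lemma lower_scale_threshold :
  2 * 2 `^ p * C2 * expR (- lower_scale p C1 C2 lam0 / 2) <= C1.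
Proof.
set M := lower_scale p C1 C2 lam0.
set K := (2 * p / expR 1) `^ p * (4 * expR 1 * C2 / C1).
have K0 : 0 < K by rewrite mulr_gt0 ?powR_gt0 ?divr_gt0 ?mulr_gt0 ?expR_gt0.
have KC1 : 4 * 2 `^ p * C2 <= K * C1.
  have -> : K * C1 = 4 * C2 * ((2 * p / expR 1) `^ p * expR 1).
    by rewrite /K; field; rewrite gt_eqF.
  by rewrite mulrAC ler_wpM2l ?mulr_ge0 ?(ltW C2_gt0) ?powR2_le_expR1_powR.
have KM : K <= expR (M / 2).
  rewrite -[leLHS](lnK (_ : K \in Num.pos)) ?posrE // ler_expR.
  have : 2 * ln K <= M by rewrite /M /lower_scale !le_max lexx.
  lra.
have E0 : 0 <= expR (- M / 2) := expR_ge0 _.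
have h1 := ler_wpM2r E0 KC1.
have h2 := ler_wpM2r E0 (ler_wpM2r (ltW C1_gt0) KM).
have h3 : expR (M / 2) * C1 * expR (- M / 2) = C1.
  by rewrite mulrAC -expRD mulNr subrr expR0 mul1r.
have : 0 <= 2 `^ p * C2 * expR (- M / 2) by rewrite !mulr_ge0 ?powR_ge0 // ltW.
lra.
Qed.

Lemma ln_4expR1_div_ge2 : C1 <= C2 -> 2 <= ln (4 * expR 1 * C2 / C1).
Proof.
move=> C12; rewrite -[leLHS](expRK 2) ler_ln ?posrE ?expR_gt0 ?divr_gt0 ?mulr_gt0 //.
have r1 : 1 <= C2 / C1 by rewrite ler_pdivlMr // mul1r.
rewrite -mulrA (_ : 2 = 1 + 1) // expRD.
have := expR1_le4 R; have := expR_gt0 (1 : R); nra.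
Qed.

Lemma lower_scale_le_ln : p <= 1 -> C1 <= C2 -> lam0 <= 4 ->
  lower_scale p C1 C2 lam0 <= 2 * ln (4 * expR 1 * C2 / C1).
Proof.
move=> p1 C12 lam4; have L2 := ln_4expR1_div_ge2 C12.
rewrite /lower_scale !ge_max -andbA; apply/and3P; split; last by lra.
- rewrite ler_pM2l // ler_ln ?posrE ?mulr_gt0 ?powR_gt0 ?divr_gt0 ?mulr_gt0 ?expR_gt0 ?invr_gt0 //.
  rewrite -[leRHS]mul1r ler_pM2r ?divr_gt0 ?mulr_gt0 ?expR_gt0 ?invr_gt0 //.
  have pe1 : 2 * p / expR 1 <= 1.
    by rewrite ler_pdivrMr ?expR_gt0 // mul1r; have := expR_ge1Dx (1 : R); lra.
  have := ge0_ler_powR (ltW p_gt0) _ _ pe1; rewrite powR1; apply.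
    by rewrite nnegrE divr_ge0 ?mulr_ge0 ?expR_ge0 // ltW.
  by rewrite nnegrE ler01.
- lra.
Qed.

Lemma lower_scale_const_le : p <= 1 -> C1 <= C2 -> lam0 <= 4 ->
  C1 / 4 * (ln (4 * expR 1 * C2 / C1))^-1 <= C1 / 2 * lower_scale p C1 C2 lam0 `^ (- p).
Proof.
move=> p1 C12 lam4.
set L := ln (4 * expR 1 * C2 / C1); set M := lower_scale p C1 C2 lam0.
have L2 : 2 <= L := ln_4expR1_div_ge2 C12.
have M0 : 0 < M := lower_scale_gt0.
have ML : M <= 2 * L := lower_scale_le_ln p1 C12 lam4.
have -> : C1 / 4 * L^-1 = C1 / 2 * (2 * L)^-1 by field; rewrite gt_eqF //; lra.
have L0 : 0 < 2 * L by lra.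
rewrite ler_pM2l ?divr_gt0 //; apply: (le_trans (y := (2 * L) `^ (- p))).
  by rewrite powRN lef_pV2 ?posrE ?powR_gt0 //; apply: ler1_powR; lra.
rewrite !powRN lef_pV2 ?posrE ?powR_gt0 //.
by apply: ge0_ler_powR; rewrite ?nnegrE ?(ltW p_gt0) ?(ltW M0) ?(ltW L0).
Qed.

End LowerScale.

Section LaplaceTransformEstimates.
Variables (R : realType) (mu : {measure set R -> \bar R}).

Lemma measurable_expR_scale (l : R) (D : set R) :
  measurable_fun D (fun x : R => (expR (- (l * x)))%:E : \bar R).
Proof.
apply/measurable_EFinP; apply: measurableT_comp => //.
have -> : (fun x : R => - (l * x)) = *%R (- l) by apply/funext => x; rewrite mulNr.
exact: mulrl_measurable.
Qed.

Lemma measurable_EFin_indic (A D : set R) : measurable A ->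
  measurable_fun D (fun x : R => (\1_A x : R)%:E : \bar R).
Proof. by move=> mA; apply/measurable_EFinP; exact: measurable_indic. Qed.

Lemma subset_itv_oc0_pos (a : R) : `]0, a] `<=` `]0, +oo[.
Proof. by move=> x /=; rewrite !in_itv /= andbT => /andP[]. Qed.

Lemma laplaceU_ge_mass (l a : R) : 0 <= l ->
  ((expR (- (l * a)))%:E * mu `]0%R, a]%classic <= laplaceU mu l)%E.
Proof.
move=> l0; have mD : measurable (`]0%R, +oo[%classic : set R) by exact: measurable_itv.
have mA : measurable (`]0%R, a]%classic : set R) by exact: measurable_itv.
rewrite /laplaceU -[X in mu X](setIidl (@subset_itv_oc0_pos a)).
rewrite -integral_indic // -ge0_integralZl //; last exact: measurable_EFin_indic.
apply: ge0_le_integral => //.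
- by apply: emeasurable_funM => //; exact: measurable_EFin_indic.
- exact: measurable_expR_scale.
move=> x _; rewrite -EFinM lee_fin indicE.
case: (boolP (x \in _)) => [|_]; last by rewrite mulr0 expR_ge0.
rewrite inE /= in_itv /= => /andP[_ xa].
by rewrite mulr1 ler_expR lerN2 ler_wpM2l.
Qed.

Lemma laplaceU_le_split (l a : R) : 0 <= l ->
  (laplaceU mu l <=
   mu `]0%R, a]%classic + (expR (- (l * a) / 2))%:E * laplaceU mu (l / 2))%E.
Proof.
move=> l0; have mD : measurable (`]0%R, +oo[%classic : set R) by exact: measurable_itv.
have mA : measurable (`]0%R, a]%classic : set R) by exact: measurable_itv.
rewrite /laplaceU -[X in mu X](setIidl (@subset_itv_oc0_pos a)).
rewrite -integral_indic // -ge0_integralZl //; last exact: measurable_expR_scale.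
rewrite -ge0_integralD //; first last.
- by apply: emeasurable_funM => //; exact: measurable_expR_scale.
- exact: measurable_EFin_indic.
apply: ge0_le_integral => //.
- exact: measurable_expR_scale.
- apply: emeasurable_funD; first exact: measurable_EFin_indic.
  by apply: emeasurable_funM => //; exact: measurable_expR_scale.
move=> x /=; rewrite in_itv /= andbT => x0.
rewrite -EFinM -EFinD lee_fin indicE.
have [xa|ax] := lerP x a.
- have -> : x \in `]0%R, a]%classic by rewrite inE /= in_itv /= x0 xa.
  have : expR (- (l * x)) <= 1 by rewrite -expR0 ler_expR oppr_le0 mulr_ge0 // ltW.
  have : 0 <= expR (- (l * a) / 2) * expR (- (l / 2 * x)) by rewrite mulr_ge0 ?expR_ge0.
  rewrite /=; lra.
- have -> : x \in `]0%R, a]%classic = false.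
    by apply/negbTE/negP; rewrite inE /= in_itv /= => /andP[_]; rewrite leNgt ax.
  rewrite add0r -expRD ler_expR.
  have : l * a <= l * x by rewrite ler_wpM2l // ltW.
  lra.
Qed.

Lemma distU_le (b a : R) : b <= a -> (distU mu b <= distU mu a)%E.
Proof.
move=> ba; apply: le_measure; rewrite ?inE; try exact: measurable_itv.
by move=> x /=; rewrite !in_itv /= => xb; apply: le_trans ba.
Qed.

Hypothesis mu_subprob : subprob_on_pos mu.

Lemma subprob_fin_num (A : set R) : measurable A -> mu A \is a fin_num.
Proof.
move=> mA; rewrite ge0_fin_numE //.
apply: (le_lt_trans (y := mu setT)); first by apply: le_measure; rewrite ?inE.
by apply: le_lt_trans mu_subprob.1 _; rewrite ltry.
Qed.

Lemma distUE (a : R) : distU mu a = mu `]0%R, a]%classic.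
Proof.
have mP : measurable (`]0%R, +oo[%classic : set R) by exact: measurable_itv.
have mA : measurable (`]0%R, a]%classic : set R) by exact: measurable_itv.
apply/le_anti/andP; split; last first.
  apply: le_measure; rewrite ?inE //.
  by move=> x /=; rewrite !in_itv /= => /andP[_].
apply: (le_trans (y := mu (`]0%R, a]%classic `|` ~` `]0%R, +oo[%classic))).
  apply: le_measure; rewrite ?inE //; first by apply: measurableU => //; exact: measurableC.
  move=> x /=; rewrite !in_itv /= => xa.
  by have [_|_] := ltP 0 x; [left | right].
apply: (le_trans (measureU2 _ mA (measurableC mP))).
rewrite -[leRHS]adde0; apply: leeD => //.
by move: mu_subprob.2 => /eqP; rewrite eq_le => /andP[].
Qed.

Variables (p C2 : R).
Hypothesis laplaceU_upper :
  forall l, 0 < l -> (laplaceU mu l <= (C2 * l `^ (- p))%:E)%E.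

Lemma distU_upper (a : R) : 0 < a -> (distU mu a <= (expR 1 * C2 * a `^ p)%:E)%E.
Proof.
move=> a0; have aV0 : 0 < a^-1 by rewrite invr_gt0.
have mA : measurable (`]0%R, a]%classic : set R) by exact: measurable_itv.
have := le_trans (laplaceU_ge_mass a (ltW aV0)) (laplaceU_upper aV0).
rewrite mulVf ?gt_eqF // powRVN ?(ltW a0) // distUE.
rewrite -(fineK (subprob_fin_num mA)) -EFinM !lee_fin => /(ler_wpM2l (expR_ge0 1)).
by rewrite mulrA -expRD subrr expR0 mul1r mulrA.
Qed.

Variables (C1 lam0 : R).
Hypothesis laplaceU_lower :
  forall l, lam0 < l -> ((C1 * l `^ (- p))%:E <= laplaceU mu l)%E.

Lemma lower_le_upper_const : 0 <= lam0 -> C1 <= C2.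
Proof.
move=> lam0_ge0; have l_gt : lam0 < lam0 + 1 by lra.
have l_gt0 : 0 < lam0 + 1 by lra.
have := le_trans (laplaceU_lower l_gt) (laplaceU_upper l_gt0).
by rewrite lee_fin ler_pM2r // powR_gt0.
Qed.

Lemma distU_ge_at_scale (s a : R) : 0 < s -> 0 < a -> lam0 < s / a ->
  2 * 2 `^ p * C2 * expR (- s / 2) <= C1 ->
  ((C1 / 2 * s `^ (- p) * a `^ p)%:E <= distU mu a)%E.
Proof.
move=> s0 a0 lam0_lt threshold; set l := s / a.
have l0 : 0 < l by rewrite divr_gt0.
have mA : measurable (`]0%R, a]%classic : set R) by exact: measurable_itv.
have split := laplaceU_le_split a (ltW l0).
rewrite /l divfK ?gt_eqF // -/l in split.
have tail : ((expR (- s / 2))%:E * laplaceU mu (l / 2) <=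
             (expR (- s / 2) * (C2 * (l / 2) `^ (- p)))%:E)%E.
  by rewrite EFinM lee_wpmul2l ?lee_fin ?expR_ge0 // laplaceU_upper // divr_gt0.
have := le_trans (laplaceU_lower lam0_lt) (le_trans split (leeD (lexx _) tail)).
rewrite distUE -(fineK (subprob_fin_num mA)) -EFinD !lee_fin.
have lN : l `^ (- p) = s `^ (- p) * a `^ p by rewrite powR_divN // ltW.
have l2N : (l / 2) `^ (- p) = l `^ (- p) * 2 `^ p by rewrite powR_divN // ltW.
rewrite -/l l2N lN.
have SP0 : 0 <= s `^ (- p) * a `^ p by rewrite mulr_ge0 ?powR_ge0.
have := ler_wpM2r SP0 threshold.
nra.
Qed.

Lemma distU_lower (M : R) : 0 < p -> 0 < M -> lam0 <= M ->
  2 * 2 `^ p * C2 * expR (- M / 2) <= C1 ->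
  forall a, 0 <= a <= 1 -> ((C1 / 2 * M `^ (- p) * a `^ p)%:E <= distU mu a)%E.
Proof.
move=> p0 M0 lam0_le threshold a /andP[a0 a1].
have [->|a_neq0] := eqVneq a 0.
  by rewrite powR0 ?gt_eqF // mulr0; exact: measure_ge0.
have a_gt0 : 0 < a by rewrite lt_neqAle eq_sym a_neq0.
have mA : measurable (`]-oo, a]%classic : set R) by exact: measurable_itv.
rewrite /distU -(fineK (subprob_fin_num mA)) lee_fin.
(* At a = 1 the scale may equal lam0, where the lower bound on Uhat is not
   available, so bound U(a t) for t < 1 instead and let t tend to 1. *)
apply: le_of_forall_mul_powR_le p0 (fine_ge0 (measure_ge0 _ _)) _ => t /andP[t0 t1].
have at0 : 0 < a * t by rewrite mulr_gt0.
have at_lt : lam0 < M / (a * t).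
  apply: (le_lt_trans lam0_le); rewrite ltr_pdivlMr // -[ltRHS]mulr1 ltr_pM2l //.
  by apply: (le_lt_trans _ t1); rewrite -[leRHS]mul1r ler_wpM2r // ltW.
have at_le : a * t <= a by rewrite -[leRHS]mulr1 ler_wpM2l // ltW.
have := le_trans (distU_ge_at_scale M0 at0 at_lt threshold) (distU_le at_le).
by rewrite /distU -(fineK (subprob_fin_num mA)) lee_fin (powRM _ (ltW a_gt0) (ltW t0)) mulrA.
Qed.

End LaplaceTransformEstimates.

Theorem lemma4p7 (R : realType) (mu : {measure set R -> \bar R}) (p C2 : R) :
  subprob_on_pos mu -> 0 < p -> 0 < C2 ->
  (forall l : R, 0 < l -> (laplaceU mu l <= (C2 * l `^ (- p))%:E)%E) ->
  (* (a) *)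
  (forall a : R, 0 < a -> (distU mu a <= (expR 1 * C2 * a `^ p)%:E)%E) /\
  (* (b) *)
  (forall (C1 lam0 : R), 0 < C1 -> 0 <= lam0 ->
     (forall l : R, lam0 < l -> ((C1 * l `^ (- p))%:E <= laplaceU mu l)%E) ->
     (let d1 := C1 / 2 *
          (Num.max (Num.max
             (2 * ln ((2 * p / expR 1) `^ p * (4 * expR 1 * C2 / C1)))
             (2 * p)) lam0) `^ (- p) in
      forall a : R, 0 <= a <= 1 -> ((d1 * a `^ p)%:E <= distU mu a)%E) /\
     (p <= 1 -> lam0 <= 4 ->
      forall a : R, 0 <= a <= 1 ->
        ((C1 / 4 * (ln (4 * expR 1 * C2 / C1))^-1 * a `^ p)%:E <= distU mu a)%E)).
Proof.
move=> sp p0 C20 upper; split; first exact: distU_upper.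
move=> C1 lam0 C10 lam0_ge0 lower.
have bound := distU_lower sp upper lower p0 (lower_scale_gt0 C1 C2 lam0 p0)
  (le_lower_scale p C1 C2 lam0) (lower_scale_threshold lam0 p0 C10 C20).
split; first exact: bound.
move=> p1 lam4 a a01; apply: le_trans (bound a a01); rewrite lee_fin.
apply: ler_wpM2r; first exact: powR_ge0.
exact: lower_scale_const_le p0 C10 C20 p1 (lower_le_upper_const upper lower lam0_ge0) lam4.
Qed.
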